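(* Let $a\ge b\ge k$ be positive integers. Then $\operatorname{Im}(\gamma_k)\subseteq\operatorname{Im}(\theta_1)$, where $\theta_1:\Lambda^{a+1}\otimes\Lambda^{b-1}\to\Lambda^a\otimes\Lambda^b$.
   Context: $K$ is a field of characteristic zero, $G=GL(n,K)$, $V=K^n$, $\Lambda=\bigoplus_i\Lambda^i$ the exterior algebra of $V$. $m$ is multiplication (also written by juxtaposition) and $\Delta_{s,t}:\Lambda^{s+t}\to\Lambda^s\otimes\Lambda^t$ the comultiplication component $v_1\cdots v_{s+t}\mapsto\sum_\sigma\mathrm{sgn}(\sigma)v_{\sigma(1)}\cdots v_{\sigma(s)}\otimes v_{\sigma(s+1)}\cdots v_{\sigma(s+t)}$ (permutations increasing on the first $s$ and last $t$ positions). $\theta_1=(1\otimes m)\circ(\Delta_{a,1}\otimes1):\Lambda^{a+1}\otimes\Lambda^{b-1}\to\Lambda^a\otimes\Lambda^b$. $\beta_k:\Lambda^a\otimes\Lambda^k\otimes\Lambda^{b-k}\to\Lambda^a\otimes\Lambda^b$ is $(m\otimes m)\circ(1\otimes\tau\otimes1)\circ(\Delta_{a-k,k}\otimes1)$ with $\tau(w\otimes z)=z\otimes w$ on $\Lambda^k\otimes\Lambda^k$, and $\gamma_k(x\otimes y\otimes z)=x\otimes yz-\beta_k(x\otimes y\otimes z)$. *)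

From mathcomp Require Import all_boot all_order all_algebra.
Set Implicit Arguments. Unset Strict Implicit. Unset Printing Implicit Defensive.
Import GRing.Theory.
Local Open Scope ring_scope.

(* Exterior algebra of V = K^n with basis e_1..e_n.  Lambda^i has basis
   e_S = e_{s_1} ... e_{s_i} (s_1 < ... < s_i) for S : {set 'I_n}, #|S| = i.
   An element of Lambda (x) Lambda is a coefficient function
   {set 'I_n} -> {set 'I_n} -> K (coefficient of e_S (x) e_T);
   an element of Lambda (x) Lambda (x) Lambda is a function of three sets. *)

Section Ext.
Variables (K : fieldType) (n : nat).
Notation sT := {set 'I_n}.

Definition sgn2 (S T : sT) : K :=
  (-1) ^+ #|[set p : 'I_n * 'I_n | [&& p.1 \in S, p.2 \in T & (p.2 < p.1)%N]]|.

(* structure constants of multiplication: e_S e_T = \sum_U mulc S T U e_U *)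
Definition mulc (S T U : sT) : K :=
  if [&& [disjoint S & T] & U == S :|: T] then sgn2 S T else 0.

(* structure constants of Delta_{s,t} : Lambda^{s+t} -> Lambda^s (x) Lambda^t:
   Delta_{s,t}(e_U) = \sum_{P,Q} comc s t U P Q e_P (x) e_Q  (shuffles) *)
Definition comc (s t : nat) (U P Q : sT) : K :=
  if [&& #|U| == (s + t)%N, #|P| == s, P \subset U & Q == U :\: P]
  then sgn2 P Q else 0.

Definition hom2 (i j : nat) (x : sT -> sT -> K) : Prop :=
  forall S T, x S T != 0 -> #|S| = i /\ #|T| = j.
Definition hom3 (i j l : nat) (w : sT -> sT -> sT -> K) : Prop :=
  forall X Y Z, w X Y Z != 0 -> [/\ #|X| = i, #|Y| = j & #|Z| = l].

(* theta_1 = (1 (x) m) o (Delta_{a,1} (x) 1) : Lambda^{a+1} (x) Lambda^{b-1}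
   -> Lambda^a (x) Lambda^b, on coefficient functions *)
Definition theta1 (a : nat) (x : sT -> sT -> K) : sT -> sT -> K :=
  fun S V => \sum_(U : sT) \sum_(W : sT) \sum_(T : sT)
               x U W * comc a 1 U S T * mulc T W V.

(* beta_k = (m (x) m) o (1 (x) tau (x) 1) o (Delta_{a-k,k} (x) 1) *)
Definition beta (a k : nat) (w : sT -> sT -> sT -> K) : sT -> sT -> K :=
  fun S V => \sum_(X : sT) \sum_(Y : sT) \sum_(Z : sT)
     w X Y Z * \sum_(P : sT) \sum_(Q : sT)
                  comc (a - k) k X P Q * mulc P Y S * mulc Q Z V.

Definition gamma (a k : nat) (w : sT -> sT -> sT -> K) : sT -> sT -> K :=
  fun S V => (\sum_(Y : sT) \sum_(Z : sT) w S Y Z * mulc Y Z V) - beta a k w S V.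

End Ext.

From mathcomp Require Import all_boot all_order all_algebra.
From mathcomp Require Import ring zify.
Set Implicit Arguments. Unset Strict Implicit. Unset Printing Implicit Defensive.
Import GRing.Theory.
Local Open Scope ring_scope.

(* Take basis vectors x = e_X of Lambda^a, y = e_Y of Lambda^k and z = e_Z, and let
   F_{j,i} = split_prod X Y Z j i be the sum of  +- e_{X\Q} e_{Y1} (x) e_Q e_{Y\Y1} e_Z
   over Q in X with |Q| = j and Y1 in Y with |Y1| = i, the signs being those of
   Delta_{a-j,j} x and Delta_{i,k-i} y.  Then F_{0,0} = x (x) yz and
   F_{k,k} = beta_k (x (x) y (x) z).
   Since Delta_{m,1} e_U = \sum_u d_u(e_U) (x) e_u for a graded derivation d_u,
   applying theta_1 to F_{j,j+1} and regrouping the terms gives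
     theta_1 F_{j,j+1} = (-1)^j ((k - j) F_{j,j} - (j + 1) F_{j+1,j+1}).
   As (j + 1) C(k, j+1) = (k - j) C(k, j), the combination
   \sum_{j<k} (-1)^j / (C(k, j) (k - j)) theta_1 F_{j,j+1} telescopes to
   F_{0,0} - F_{k,k} = gamma_k (x (x) y (x) z); characteristic zero makes the
   coefficients well defined. *)

Section Subsets.
Variable T : finType.
Implicit Types (A B C X Y Q : {set T}) (u : T).

Lemma cardsUd A B : [disjoint A & B] -> #|A :|: B| = (#|A| + #|B|)%N.
Proof. by move=> dAB; apply/eqP; rewrite (leq_card_setU A B). Qed.

Lemma disjointsUl A B C :
  [disjoint A :|: B & C] = [disjoint A & C] && [disjoint B & C].
Proof. by rewrite !disjoints_subset subUset. Qed.

Lemma disjointsUr A B C :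
  [disjoint C & A :|: B] = [disjoint C & A] && [disjoint C & B].
Proof. by rewrite ![[disjoint C & _]]disjoint_sym disjointsUl. Qed.

Lemma disjoints1r A u : [disjoint A & [set u]] = (u \notin A).
Proof. by rewrite disjoint_sym disjoints1. Qed.

Lemma disjoints0r A : [disjoint A & set0].
Proof. by rewrite -setI_eq0 setI0. Qed.

Lemma disjoints0l A : [disjoint set0 & A].
Proof. by rewrite -setI_eq0 set0I. Qed.

Definition ksub (j : nat) X Q : bool := (Q \subset X) && (#|Q| == j).

Lemma ksub0 X Q : ksub 0 X Q = (Q == set0).
Proof. by rewrite /ksub cards_eq0; case: eqP => [->|]; rewrite ?sub0set ?andbF. Qed.

Lemma ksub_card (k : nat) Y Q : #|Y| = k -> ksub k Y Q = (Q == Y).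
Proof.
move=> cY; rewrite /ksub eqEcard cY.
apply/andP/andP => [[sQY /eqP ->] | [sQY le_kQ]]; split=> //.
by rewrite eqn_leq le_kQ -cY subset_leq_card.
Qed.

Lemma ksub_setU1 (j : nat) u Y A :
  (ksub j.+1 Y (u |: A) && ((u |: A) :\ u == A)) = ksub j Y A && (u \in Y :\: A).
Proof.
rewrite /ksub subUset sub1set cardsU1 in_setD.
case uA: (u \in A); last first.
  rewrite setU1K ?uA // eqxx andbT add1n eqSS /=.
  by case: (u \in Y); rewrite ?andbT ?andbF.
rewrite /= !andbF; apply/negbTE/negP => /andP[_ /eqP eA].
by move: uA; rewrite -eA setD11.
Qed.

Section SubsetSums.
Variable R : pzSemiRingType.

(* Double counting of the pairs A \subset B of a j-subset and a (j+1)-subset of Y. *)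
Lemma sum_ksub_succ Y (j : nat) (f : {set T} -> {set T} -> R) :
  \sum_(B | ksub j.+1 Y B) \sum_(u in B) f (B :\ u) B =
  \sum_(A | ksub j Y A) \sum_(u in Y :\: A) f A (u |: A).
Proof.
rewrite (exchange_big_dep xpredT) //= [RHS](exchange_big_dep xpredT) //=.
apply: eq_bigr => u _.
rewrite (reindex_onto (fun A => u |: A) (fun B => B :\ u)) /=; last first.
  by move=> B /andP[_ uB]; rewrite setD1K.
apply: eq_big => [A|A /andP[_ /eqP ->]] //.
by rewrite setU11 andbT; exact: ksub_setU1.
Qed.

Lemma sum_ksub_setU1 X (j : nat) (g : {set T} -> R) :
  \sum_(Q | ksub j X Q) \sum_(u in X :\: Q) g (u |: Q) =
  j.+1%:R * \sum_(Q | ksub j.+1 X Q) g Q.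
Proof.
rewrite -(sum_ksub_succ X j (fun _ B => g B)) mulr_sumr.
by apply: eq_bigr => B /andP[_ /eqP cB]; rewrite sumr_const cB mulr_natl.
Qed.

Lemma sum_ksub_setD1 Y (j : nat) (g : {set T} -> R) :
  \sum_(B | ksub j.+1 Y B) \sum_(u in B) g (B :\ u) =
  (#|Y| - j)%:R * \sum_(A | ksub j Y A) g A.
Proof.
rewrite (sum_ksub_succ Y j (fun A _ => g A)) mulr_sumr.
by apply: eq_bigr => A /andP[sAY /eqP cA]; rewrite sumr_const cardsDS // cA mulr_natl.
Qed.

End SubsetSums.

End Subsets.

Lemma sum_neq0P (V : nmodType) (I : finType) (P : pred I) (F : I -> V) :
  \sum_(i | P i) F i != 0 -> exists2 i, P i & F i != 0.
Proof.
move=> nzF; apply/exists_inP; apply: contraNT nzF => /exists_inPn allz.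
by rewrite big1 // => i Pi; apply/eqP/negbNE/allz.
Qed.

Section ExteriorCoefficients.
Variables (K : fieldType) (n : nat).
Local Notation sT := {set 'I_n}.
Local Notation sgn2 := (@sgn2 K n).
Local Notation mulc := (@mulc K n).
Local Notation comc := (@comc K n).

Definition inversions (S T : sT) : nat := \sum_(x in S) \sum_(y in T) (y < x)%N.

Lemma sgn2E S T : sgn2 S T = (-1) ^+ inversions S T.
Proof.
rewrite /sgn2 /inversions; congr (_ ^+ _).
rewrite -sum1_card pair_big_dep /= [LHS]big_mkcond [RHS]big_mkcond /=.
apply: eq_bigr => p _; rewrite inE.
by case: (p.1 \in S); case: (p.2 \in T); case: (p.2 < p.1)%N.
Qed.

Lemma inversionsUl (A B T : sT) : [disjoint A & B] ->
  inversions (A :|: B) T = (inversions A T + inversions B T)%N.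
Proof. by move=> dAB; rewrite /inversions -bigU //=; apply: eq_bigl => x; rewrite !inE. Qed.

Lemma inversionsUr (A B T : sT) : [disjoint A & B] ->
  inversions T (A :|: B) = (inversions T A + inversions T B)%N.
Proof.
move=> dAB; rewrite /inversions -big_split; apply: eq_bigr => x _.
by rewrite -bigU //=; apply: eq_bigl => y; rewrite !inE.
Qed.

Lemma inversionsC (S T : sT) : [disjoint S & T] ->
  (inversions S T + inversions T S)%N = (#|S| * #|T|)%N.
Proof.
move=> dST; rewrite /inversions [X in (_ + X)%N](exchange_big_dep (mem S)) //=.
have -> : (\sum_(j in S) \sum_(i in T | j \in S) (j < i) =
           \sum_(x in S) \sum_(y in T) (x < y))%N.
  by apply: eq_bigr => x xS; apply: eq_bigl => y; rewrite xS andbT.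
rewrite -big_split -sum1_card big_distrl /=; apply: eq_bigr => x xS.
rewrite -big_split /= -sum1_card mul1n; apply: eq_bigr => y yT.
have nxy : x != y by apply: contraTneq yT => <-; rewrite (disjointFr dST).
by move: nxy; rewrite -(inj_eq val_inj); case: ltngtP.
Qed.

Lemma sgn2Ul (A B T : sT) : [disjoint A & B] -> sgn2 (A :|: B) T = sgn2 A T * sgn2 B T.
Proof. by move=> dAB; rewrite !sgn2E inversionsUl // exprD. Qed.

Lemma sgn2Ur (A B T : sT) : [disjoint A & B] -> sgn2 T (A :|: B) = sgn2 T A * sgn2 T B.
Proof. by move=> dAB; rewrite !sgn2E inversionsUr // exprD. Qed.

Lemma sgn2_set0l (T : sT) : sgn2 set0 T = 1.
Proof. by rewrite sgn2E /inversions big_set0. Qed.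

Lemma sgn2_set0r (T : sT) : sgn2 T set0 = 1.
Proof. by rewrite sgn2E /inversions big1 // => x _; rewrite big_set0. Qed.

Lemma sgn2_sqr (S T : sT) : sgn2 S T * sgn2 S T = 1.
Proof. by rewrite -expr2 sgn2E sqrr_sign. Qed.

Lemma sgn2C (S T : sT) : [disjoint S & T] ->
  sgn2 S T * sgn2 T S = (-1) ^+ (#|S| * #|T|).
Proof. by move=> dST; rewrite !sgn2E -exprD inversionsC. Qed.

Lemma sgn2_set1C (u : 'I_n) (A : sT) : u \notin A ->
  sgn2 [set u] A * sgn2 A [set u] = (-1) ^+ #|A|.
Proof. by move=> uA; rewrite sgn2C ?disjoints1 // cards1 mul1n. Qed.

Lemma sgn2_shift (u : 'I_n) (P Q : sT) : u \in P -> u \notin Q ->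
  sgn2 P Q * sgn2 (P :\ u) [set u] * sgn2 [set u] Q = sgn2 (P :\ u) (u |: Q).
Proof.
move=> uP uQ; rewrite -{1}(setD1K uP) sgn2Ul ?disjoints1 ?setD11 // sgn2Ur ?disjoints1 //.
by ring: (sgn2_sqr [set u] Q).
Qed.

Lemma mulc_card (A B U : sT) : mulc A B U != 0 -> #|U| = (#|A| + #|B|)%N.
Proof. by rewrite /mulc; case: andP => [[dAB /eqP ->] _|]; rewrite ?cardsUd ?eqxx. Qed.

Lemma mulc_set0r (A S : sT) : mulc A set0 S = (S == A)%:R.
Proof. by rewrite /mulc disjoints0r setU0 sgn2_set0r; case: (S == A). Qed.

(* e_Q e_R e_Z = \sum_V mulc3 Q R Z V e_V *)
Definition mulc3 (Q R Z V : sT) : K :=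
  if [&& [disjoint Q & R], [disjoint Q & Z], [disjoint R & Z] & V == Q :|: R :|: Z]
  then sgn2 Q R * sgn2 Q Z * sgn2 R Z else 0.

Lemma mulc3_card (Q R Z V : sT) :
  mulc3 Q R Z V != 0 -> #|V| = (#|Q| + #|R| + #|Z|)%N.
Proof.
rewrite /mulc3; case: and4P => [[dQR dQZ dRZ /eqP ->] _|]; last by rewrite eqxx.
by rewrite !cardsUd // disjointsUl dQZ.
Qed.

Lemma mulc3_set0l (R Z V : sT) : mulc3 set0 R Z V = mulc R Z V.
Proof. by rewrite /mulc3 /mulc !disjoints0l set0U !sgn2_set0l !mul1r. Qed.

Lemma mulc3_set0m (Q Z V : sT) : mulc3 Q set0 Z V = mulc Q Z V.
Proof.
by rewrite /mulc3 /mulc disjoints0r disjoints0l setU0 sgn2_set0r sgn2_set0l mul1r mulr1.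
Qed.

Lemma sum_mulc3 (Q R Z : sT) (g : sT -> K) :
  \sum_W mulc3 Q R Z W * g W = mulc3 Q R Z (Q :|: R :|: Z) * g (Q :|: R :|: Z).
Proof.
rewrite (bigD1 (Q :|: R :|: Z)) //= big1 ?addr0 // => W /negbTE nW.
by rewrite /mulc3 nW !andbF mul0r.
Qed.

Lemma mulc_set1_mulc3l (u : 'I_n) (Q R Z V : sT) : u \notin Q ->
  \sum_W mulc3 Q R Z W * mulc [set u] W V = sgn2 [set u] Q * mulc3 (u |: Q) R Z V.
Proof.
move=> uQ; rewrite sum_mulc3 /mulc3 /mulc eqxx !andbT !disjointsUl !disjointsUr.
rewrite !disjoints1 (negbTE uQ) /= !setUA.
case dQR: [disjoint Q & R]; case dQZ: [disjoint Q & Z]; case dRZ: [disjoint R & Z];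
  case uR: (u \in R); case uZ: (u \in Z); rewrite /= ?mul0r ?mulr0 //.
case: (V == _); rewrite ?mulr0 //.
have dQRZ : [disjoint Q :|: R & Z] by rewrite disjointsUl dQZ dRZ.
rewrite sgn2Ur // sgn2Ur // sgn2Ul ?disjoints1 // sgn2Ul ?disjoints1 //; ring.
Qed.

Lemma mulc_set1_mulc3m (u : 'I_n) (Q R Z V : sT) : u \notin R ->
  \sum_W mulc3 Q R Z W * mulc [set u] W V =
  (-1) ^+ #|Q| * sgn2 [set u] R * mulc3 Q (u |: R) Z V.
Proof.
move=> uR; rewrite sum_mulc3 /mulc3 /mulc eqxx !andbT !disjointsUl !disjointsUr.
rewrite !disjoints1 disjoints1r (negbTE uR) /= [Q :|: (u |: R)]setUCA -!setUA.
case dQR: [disjoint Q & R]; case dQZ: [disjoint Q & Z]; case dRZ: [disjoint R & Z];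
  case uQ: (u \in Q); case uZ: (u \in Z); rewrite /= ?mul0r ?mulr0 //.
case: (V == _); rewrite ?mulr0 //.
rewrite !sgn2Ur ?disjointsUr ?dQR ?dQZ ?disjoints1 // sgn2Ul ?disjoints1 //.
by rewrite -(@sgn2_set1C u Q) ?uQ //; ring: (sgn2_sqr Q [set u]).
Qed.

(* The coefficient of e_S in d_u e_U, where d_u is the right contraction by the
   dual basis vector of e_u: d_u (e_S e_u) = e_S for u \notin S. *)
Definition derivc (U : sT) (u : 'I_n) (S : sT) : K :=
  ((u \in U) && (S == U :\ u))%:R * sgn2 (U :\ u) [set u].

Lemma comc_m1 (m : nat) (U S T : sT) : #|U| = m.+1 ->
  comc m 1 U S T = \sum_u (T == [set u])%:R * derivc U u S.
Proof.
move=> cU; rewrite /comc /derivc cU addn1 eqxx /=.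
have [/cards1P [v ->]|nT] := boolP (#|T| == 1%N); last first.
  rewrite big1 => [|w _]; last by case: (T =P [set w]) nT => [->|_ _]; rewrite ?cards1 ?mul0r.
  case: and3P => // [[/eqP cS sSU /eqP eT]].
  by move: nT; rewrite eT cardsDS // cU cS subSnn.
rewrite (bigD1 v) //= big1 ?addr0 => [|w /negbTE nwv]; last first.
  by rewrite (inj_eq set1_inj) eq_sym nwv mul0r.
have -> : [&& #|S| == m, S \subset U & [set v] == U :\: S] = (v \in U) && (S == U :\ v).
  apply/and3P/andP => [[cS sSU /eqP eUS]|[vU /eqP ->]].
    have vU : v \in U by move: (set11 v); rewrite eUS inE => /andP[].
    by split=> //; apply/eqP; rewrite eUS setDDr setDv set0U; apply/esym/setIidPr.
  split; first by move: cU; rewrite (cardsD1 v U) vU add1n => -[] ->.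
    exact: subD1set.
  by rewrite setDDr setDv set0U (setIidPr _) ?sub1set.
by rewrite eqxx mul1r; case: andP => [[_ /eqP ->]|]; rewrite ?mul1r ?mul0r.
Qed.

Definition leibniz_rhs (A B S : sT) (u : 'I_n) : K :=
  (u \in A)%:R * (-1) ^+ #|B| * sgn2 (A :\ u) [set u] * mulc (A :\ u) B S
  + (u \in B)%:R * sgn2 (B :\ u) [set u] * mulc A (B :\ u) S.

Lemma derivc_mulc_disjoint (u : 'I_n) (A B S : sT) : [disjoint A & B] ->
  \sum_U mulc A B U * derivc U u S = leibniz_rhs A B S u.
Proof.
move=> dAB; rewrite (bigD1 (A :|: B)) //= big1 ?addr0 => [|U /negbTE nU]; last first.
  by rewrite /mulc nU andbF mul0r.
rewrite /leibniz_rhs /derivc /mulc dAB eqxx in_setU.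
have [uA|nuA] := boolP (u \in A).
  have nuB : u \notin B by rewrite (disjointFr dAB).
  have dA'B : [disjoint A :\ u & B].
    by move: dAB; rewrite -{1}(setD1K uA) disjointsUl => /andP[].
  have -> : (A :|: B) :\ u = A :\ u :|: B.
    by rewrite setDUl; congr (_ :|: _); apply/setDidPl; rewrite disjoints1r.
  rewrite (negbTE nuB) !mul0r addr0 dA'B /=.
  case: (S == _); rewrite ?mul0r ?mulr0 // !mul1r.
  rewrite -{1}(setD1K uA) (@sgn2Ul [set u] (A :\ u) B) ?disjoints1 ?setD11 //.
  by rewrite sgn2Ul // -(sgn2_set1C nuB); ring.
rewrite /= !mul0r add0r.
have [uB|_] := boolP (u \in B); last by rewrite !(mul0r, mulr0).
have dAB' : [disjoint A & B :\ u].
  by move: dAB; rewrite -{1}(setD1K uB) disjointsUr => /andP[].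
have -> : (A :|: B) :\ u = A :|: B :\ u.
  by rewrite setDUl; congr (_ :|: _); apply/setDidPl; rewrite disjoints1r.
rewrite dAB' /=; case: (S == _); rewrite ?mul0r ?mulr0 // !mul1r.
rewrite -{1}(setD1K uB) (@sgn2Ur [set u] (B :\ u) A) ?disjoints1 ?setD11 //.
by rewrite sgn2Ul //; ring: (sgn2_sqr A [set u]).
Qed.

Lemma leibniz_rhs_overlap (u : 'I_n) (A B S : sT) : ~~ [disjoint A & B] ->
  leibniz_rhs A B S u = 0.
Proof.
move=> nAB; rewrite /leibniz_rhs /mulc.
have [uA|nuA] := boolP (u \in A); have [uB|nuB] := boolP (u \in B).
- have -> : [disjoint A :\ u & B] = [disjoint A :\ u & B :\ u].
    by rewrite -{1}(setD1K uB) disjointsUr disjoints1r setD11.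
  have -> : [disjoint A & B :\ u] = [disjoint A :\ u & B :\ u].
    by rewrite -{1}(setD1K uA) disjointsUl disjoints1 setD11.
  have -> : A :\ u :|: B = A :|: B :\ u.
    by apply/setP => x; rewrite !inE; case: (x =P u) => [->|]; rewrite ?uA ?uB ?orbT.
  case: ifP => _; rewrite ?mulr0 ?addr0 // !mul1r.
  have -> : sgn2 (A :\ u) B = sgn2 (A :\ u) [set u] * sgn2 (A :\ u) (B :\ u).
    by rewrite -sgn2Ur ?setD1K // disjoints1 setD11.
  have -> : sgn2 A (B :\ u) = sgn2 [set u] (B :\ u) * sgn2 (A :\ u) (B :\ u).
    by rewrite -sgn2Ul ?setD1K // disjoints1 setD11.
  rewrite (cardsD1 u B) uB exprS -(@sgn2_set1C u (B :\ u)) ?setD11 //.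
  by ring: (sgn2_sqr (A :\ u) [set u]).
- have -> : [disjoint A :\ u & B] = false.
    by apply: contraNF nAB; rewrite -{2}(setD1K uA) disjointsUl disjoints1 nuB => ->.
  by rewrite /= !(mul0r, mulr0, addr0).
- have -> : [disjoint A & B :\ u] = false.
    by apply: contraNF nAB; rewrite -{2}(setD1K uB) disjointsUr disjoints1r nuA => ->.
  by rewrite /= !(mul0r, mulr0, addr0).
- by rewrite !(mul0r, addr0).
Qed.

Lemma derivc_mulc (u : 'I_n) (A B S : sT) :
  \sum_U mulc A B U * derivc U u S = leibniz_rhs A B S u.
Proof.
have [/derivc_mulc_disjoint -> // | nAB] := boolP [disjoint A & B].
by rewrite leibniz_rhs_overlap // big1 // => U _; rewrite /mulc (negbTE nAB) mul0r.
Qed.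

Lemma theta1_sum (a : nat) (I : finType) (P : pred I) (f : I -> sT -> sT -> K) (S V : sT) :
  theta1 a (fun U W => \sum_(i | P i) f i U W) S V = \sum_(i | P i) theta1 a (f i) S V.
Proof.
rewrite /theta1; under eq_bigr => U _ do under eq_bigr => W _ do under eq_bigr => T _
  do rewrite !mulr_suml.
under eq_bigr => U _ do under eq_bigr => W _ do rewrite exchange_big.
by under eq_bigr => U _ do rewrite exchange_big; rewrite exchange_big.
Qed.

Lemma theta1_scale (a : nat) (c : K) (f : sT -> sT -> K) (S V : sT) :
  theta1 a (fun U W => c * f U W) S V = c * theta1 a f S V.
Proof.
rewrite /theta1 mulr_sumr; apply: eq_bigr => U _; rewrite mulr_sumr.
by apply: eq_bigr => W _; rewrite mulr_sumr; apply: eq_bigr => T _; rewrite !mulrA.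
Qed.

Lemma theta1_tensor (a : nat) (p q : sT -> K) (S V : sT) :
  theta1 a (fun U W => p U * q W) S V =
  \sum_T (\sum_U p U * comc a 1 U S T) * (\sum_W q W * mulc T W V).
Proof.
rewrite /theta1; under eq_bigr => U _ do rewrite exchange_big.
rewrite exchange_big; apply: eq_bigr => T _ /=.
rewrite mulr_suml; apply: eq_bigr => U _; rewrite mulr_sumr.
by apply: eq_bigr => W _; ring.
Qed.

Lemma theta1_mulc_tensor (a : nat) (A B : sT) (q : sT -> K) (S V : sT) :
  (#|A| + #|B|)%N = a.+1 ->
  theta1 a (fun U W => mulc A B U * q W) S V =
  (-1) ^+ #|B| * \sum_(u in A)
     sgn2 (A :\ u) [set u] * mulc (A :\ u) B S * \sum_W q W * mulc [set u] W V
  + \sum_(u in B) sgn2 (B :\ u) [set u] * mulc A (B :\ u) S * \sum_W q W * mulc [set u] W V.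
Proof.
move=> cAB; rewrite theta1_tensor.
have comc_mulc T : \sum_u (T == [set u])%:R * leibniz_rhs A B S u =
                   \sum_U mulc A B U * comc a 1 U S T.
  under eq_bigr => u _ do rewrite -derivc_mulc mulr_sumr.
  rewrite exchange_big; apply: eq_bigr => U _ /=.
  have [->|nzU] := eqVneq (mulc A B U) 0; first by rewrite mul0r big1 // => u _; ring.
  by rewrite comc_m1 ?(mulc_card nzU) // mulr_sumr; apply: eq_bigr => u _; ring.
under eq_bigr => T _ do rewrite -comc_mulc mulr_suml.
rewrite exchange_big /= mulr_sumr.
rewrite [X in _ = X + _]big_mkcond [X in _ = _ + X]big_mkcond -big_split /=.
apply: eq_bigr => u _; rewrite [LHS](bigD1 [set u]) //= [X in _ + X]big1 ?addr0 => [|T nT].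
  by rewrite eqxx /leibniz_rhs; do 2 case: (u \in _); rewrite /= ?mul1r ?mul0r; ring.
by rewrite (negbTE nT) !mul0r.
Qed.

Definition split_sign (X Y Q Y1 : sT) : K := sgn2 (X :\: Q) Q * sgn2 Y1 (Y :\: Y1).

Definition split_term (X Y Z S V Q Y1 : sT) : K :=
  split_sign X Y Q Y1 * (mulc (X :\: Q) Y1 S * mulc3 Q (Y :\: Y1) Z V).

Definition split_prod (X Y Z : sT) (j i : nat) (S V : sT) : K :=
  \sum_(Q | ksub j X Q) \sum_(Y1 | ksub i Y Y1) split_term X Y Z S V Q Y1.

Lemma split_term_setU1 (u : 'I_n) (X Y Z S V Q Y1 : sT) : u \in X :\: Q ->
  split_sign X Y Q Y1 * (sgn2 ((X :\: Q) :\ u) [set u] * mulc ((X :\: Q) :\ u) Y1 S *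
    (sgn2 [set u] Q * mulc3 (u |: Q) (Y :\: Y1) Z V)) = split_term X Y Z S V (u |: Q) Y1.
Proof.
move=> uXQ; have uQ : u \notin Q by move: uXQ; rewrite in_setD => /andP[].
rewrite /split_term /split_sign.
have <- : (X :\: Q) :\ u = X :\: (u |: Q) by rewrite setDDl setUC.
by rewrite -(sgn2_shift uXQ uQ); ring.
Qed.

Lemma split_term_setD1 (u : 'I_n) (X Y Z S V Q Y1 : sT) : Y1 \subset Y -> u \in Y1 ->
  split_sign X Y Q Y1 * (sgn2 (Y1 :\ u) [set u] * mulc (X :\: Q) (Y1 :\ u) S *
    (sgn2 [set u] (Y :\: Y1) * mulc3 Q (u |: (Y :\: Y1)) Z V)) =
  split_term X Y Z S V Q (Y1 :\ u).
Proof.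
move=> sY1Y uY1; have uYY1 : u \notin Y :\: Y1 by rewrite in_setD uY1.
rewrite /split_term /split_sign.
have <- : u |: (Y :\: Y1) = Y :\: (Y1 :\ u).
  apply/setP => x; rewrite !inE; case: (x =P u) => [->|] /=; last by rewrite andbC.
  by rewrite (subsetP sY1Y).
by rewrite -(sgn2_shift uY1 uYY1); ring.
Qed.

Lemma theta1_split_term (a j : nat) (X Y Z Q Y1 S V : sT) :
  #|X| = a -> ksub j X Q -> ksub j.+1 Y Y1 ->
  theta1 a (fun U W => split_term X Y Z U W Q Y1) S V =
  (-1) ^+ j.+1 * \sum_(u in X :\: Q) split_term X Y Z S V (u |: Q) Y1
  + (-1) ^+ j * \sum_(u in Y1) split_term X Y Z S V Q (Y1 :\ u).
Proof.
move=> cX /andP[sQX /eqP cQ] /andP[sY1Y /eqP cY1].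
have cXQY1 : (#|X :\: Q| + #|Y1|)%N = a.+1.
  by rewrite cardsDS // cX cQ cY1 addnS subnK // -cQ -cX subset_leq_card.
rewrite {1}/split_term theta1_scale theta1_mulc_tensor // cY1 mulrDr; congr (_ + _).
  rewrite mulrCA; congr (_ * _); rewrite mulr_sumr; apply: eq_bigr => u uXQ.
  have uQ : u \notin Q by move: uXQ; rewrite in_setD => /andP[].
  by rewrite mulc_set1_mulc3l // -split_term_setU1.
rewrite mulr_sumr mulr_sumr; apply: eq_bigr => u uY1.
rewrite mulc_set1_mulc3m ?in_setD ?uY1 // -split_term_setD1 // cQ; ring.
Qed.

Lemma theta1_split_prod (a j : nat) (X Y Z S V : sT) : #|X| = a ->
  theta1 a (split_prod X Y Z j j.+1) S V =
  (-1) ^+ j * ((#|Y| - j)%:R * split_prod X Y Z j j S V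
               - j.+1%:R * split_prod X Y Z j.+1 j.+1 S V).
Proof.
move=> cX; rewrite /split_prod theta1_sum.
rewrite (eq_bigr (fun Q => \sum_(Y1 | ksub j.+1 Y Y1)
   ((-1) ^+ j.+1 * \sum_(u in X :\: Q) split_term X Y Z S V (u |: Q) Y1
    + (-1) ^+ j * \sum_(u in Y1) split_term X Y Z S V Q (Y1 :\ u)))); last first.
  by move=> Q sQ; rewrite theta1_sum; apply: eq_bigr => Y1 sY1; apply: theta1_split_term.
under eq_bigr => Q _ do rewrite big_split /= -!mulr_sumr.
rewrite big_split /= -!mulr_sumr exchange_big /=.
under eq_bigr => Y1 _ do rewrite (sum_ksub_setU1 X j (split_term X Y Z S V ^~ Y1)).
under [X in _ + _ * X]eq_bigr => Q _ do rewrite (sum_ksub_setD1 Y j (split_term X Y Z S V Q)).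
by rewrite -!mulr_sumr exchange_big exprS; ring.
Qed.

Lemma split_prod00 (X Y Z S V : sT) :
  split_prod X Y Z 0 0 S V = (S == X)%:R * mulc Y Z V.
Proof.
rewrite /split_prod (big_pred1 set0) => [|Q]; last by rewrite ksub0.
rewrite (big_pred1 set0) => [|Y1]; last by rewrite ksub0.
by rewrite /split_term /split_sign !setD0 sgn2_set0r sgn2_set0l mulc_set0r mulc3_set0l !mul1r.
Qed.

Lemma sum_comc (s t : nat) (X : sT) (F : sT -> sT -> K) : #|X| = (s + t)%N ->
  \sum_P \sum_Q comc s t X P Q * F P Q =
  \sum_(Q | ksub t X Q) sgn2 (X :\: Q) Q * F (X :\: Q) Q.
Proof.
move=> cX; transitivity (\sum_(P | ksub s X P) sgn2 P (X :\: P) * F P (X :\: P)).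
  rewrite [RHS]big_mkcond; apply: eq_bigr => P _ /=.
  rewrite (bigD1 (X :\: P)) //= big1 ?addr0 => [|Q nQ]; last first.
    by rewrite /comc (negbTE nQ) !andbF mul0r.
  by rewrite /comc /ksub cX !eqxx /= andbT [(_ \subset _) && _]andbC; case: ifP; rewrite ?mul0r.
rewrite [LHS](reindex_onto (fun Q => X :\: Q) (fun P => X :\: P)) /=; last first.
  by move=> P /andP[sPX _]; rewrite setDDr setDv set0U (setIidPr sPX).
apply: eq_big => [Q|Q /andP[_ /eqP ->]] //.
rewrite /ksub subsetDl setDDr setDv set0U /=.
have [sQX|nsQX] := boolP (Q \subset X); last first.
  by apply/negbTE; apply: contra nsQX => /andP[_ /eqP <-]; apply: subsetIl.
rewrite /= (setIidPr sQX) eqxx andbT cardsDS // cX.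
have := subset_leq_card sQX; rewrite cX.
by case: (#|Q| =P t) => [-> | nQt leQ]; [rewrite addnK eqxx | apply/eqP; lia].
Qed.

Lemma split_prod_kk (a k : nat) (X Y Z S V : sT) :
  #|X| = a -> #|Y| = k -> (k <= a)%N ->
  split_prod X Y Z k k S V =
  \sum_P \sum_Q comc (a - k) k X P Q * mulc P Y S * mulc Q Z V.
Proof.
move=> cX cY le_ka.
under [RHS]eq_bigr => P _ do under eq_bigr => Q _ do rewrite -mulrA.
rewrite sum_comc ?subnK //; apply: eq_bigr => Q _.
rewrite (big_pred1 Y) => [|Y1]; last exact: ksub_card.
by rewrite /split_term /split_sign setDv sgn2_set0r mulc3_set0m mulr1.
Qed.

Lemma split_prod_card (X Y Z : sT) (j i : nat) (U W : sT) :
  split_prod X Y Z j i U W != 0 ->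
  #|U| = (#|X| - j + i)%N /\ #|W| = (j + (#|Y| - i) + #|Z|)%N.
Proof.
case/sum_neq0P => Q /andP[sQX /eqP cQ] /sum_neq0P [Y1 /andP[sY1Y /eqP cY1]].
rewrite /split_term !mulf_eq0 !negb_or => /and3P[_ /mulc_card -> /mulc3_card ->].
by rewrite !cardsDS // cQ cY1.
Qed.

Definition telescope_coef (k j : nat) : K := (-1) ^+ j / ('C(k, j) * (k - j))%:R.

Lemma telescope_coefE (k j : nat) (x y : K) : [pchar K] =i pred0 -> (j < k)%N ->
  telescope_coef k j * ((-1) ^+ j * ((k - j)%:R * x - j.+1%:R * y)) =
  x / 'C(k, j)%:R - y / 'C(k, j.+1)%:R.
Proof.
move=> char0 lt_jk; have nz m : (0 < m)%N -> (m%:R : K) != 0.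
  by move=> m_gt0; rewrite ((pcharf0P K).1 char0) -lt0n.
have nzC : 'C(k, j)%:R != 0 :> K by rewrite nz // bin_gt0 ltnW.
have nzC1 : 'C(k, j.+1)%:R != 0 :> K by rewrite nz // bin_gt0.
have nzkj : (k - j)%:R != 0 :> K by rewrite nz // subn_gt0.
have -> : j.+1%:R = (k - j)%:R * 'C(k, j)%:R / 'C(k, j.+1)%:R :> K.
  by rewrite -!natrM -mul_bin_left natrM mulfK.
by rewrite /telescope_coef natrM; field: (sqrr_sign K j); rewrite nzC nzC1 nzkj.
Qed.

Lemma theta1_telescope (a k : nat) (X Y Z S V : sT) : [pchar K] =i pred0 ->
  #|X| = a -> #|Y| = k ->
  \sum_(j < k) telescope_coef k j * theta1 a (split_prod X Y Z j j.+1) S V =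
  split_prod X Y Z 0 0 S V - split_prod X Y Z k k S V.
Proof.
move=> char0 cX cY; pose f j := - (split_prod X Y Z j j S V / 'C(k, j)%:R).
rewrite -(big_mkord xpredT (fun j => telescope_coef k j * theta1 a (split_prod X Y Z j j.+1) S V)).
rewrite (telescope_sumr_eq f) // => [|j /andP[_ lt_jk]].
  by rewrite /f bin0 binn !divr1 opprK addrC.
by rewrite theta1_split_prod // cY telescope_coefE // /f opprK addrC.
Qed.

Lemma hom2_sum (i j : nat) (I : finType) (f : I -> sT -> sT -> K) :
  (forall t, hom2 i j (f t)) -> hom2 i j (fun S T => \sum_t f t S T).
Proof. by move=> hf S T /sum_neq0P [t _ /hf]. Qed.

Lemma hom2_scale (i j : nat) (c : K) (f : sT -> sT -> K) :
  hom2 i j f -> hom2 i j (fun S T => c * f S T).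
Proof. by move=> hf S T; rewrite mulf_eq0 negb_or => /andP[_ /hf]. Qed.

Definition gamma_preimage (k : nat) (w : sT -> sT -> sT -> K) (U W : sT) : K :=
  \sum_X \sum_Y \sum_Z w X Y Z *
    \sum_(j < k) telescope_coef k j * split_prod X Y Z j j.+1 U W.

Lemma gammaE (a k : nat) (w : sT -> sT -> sT -> K) (S V : sT) :
  gamma a k w S V = \sum_X \sum_Y \sum_Z w X Y Z *
    ((S == X)%:R * mulc Y Z V
     - \sum_P \sum_Q comc (a - k) k X P Q * mulc P Y S * mulc Q Z V).
Proof.
rewrite /gamma /beta.
have -> : \sum_Y \sum_Z w S Y Z * mulc Y Z V =
          \sum_X \sum_Y \sum_Z w X Y Z * ((S == X)%:R * mulc Y Z V).
  rewrite [RHS](bigD1 S) //= [X in _ + X]big1 ?addr0 => [|X nXS].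
    by apply: eq_bigr => Y _; apply: eq_bigr => Z _; rewrite eqxx mul1r.
  by apply: big1 => Y _; apply: big1 => Z _; rewrite eq_sym (negbTE nXS) mul0r mulr0.
rewrite -sumrB; apply: eq_bigr => X _; rewrite -sumrB; apply: eq_bigr => Y _.
by rewrite -sumrB; apply: eq_bigr => Z _; rewrite mulrBr.
Qed.

Lemma theta1_gamma_preimage (a k : nat) (w : sT -> sT -> sT -> K) (S V : sT) :
  [pchar K] =i pred0 -> (k <= a)%N ->
  (forall X Y Z, w X Y Z != 0 -> #|X| = a /\ #|Y| = k) ->
  theta1 a (gamma_preimage k w) S V = gamma a k w S V.
Proof.
move=> char0 le_ka hw; rewrite gammaE /gamma_preimage theta1_sum.
apply: eq_bigr => X _; rewrite theta1_sum; apply: eq_bigr => Y _.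
rewrite theta1_sum; apply: eq_bigr => Z _; rewrite theta1_scale.
have [->|/hw[cX cY]] := eqVneq (w X Y Z) 0; first by rewrite !mul0r.
rewrite theta1_sum; under eq_bigr => j _ do rewrite theta1_scale.
by rewrite theta1_telescope // split_prod00 (split_prod_kk _ _ _ cX cY).
Qed.

Lemma hom2_gamma_preimage (a b k : nat) (w : sT -> sT -> sT -> K) :
  (0 < k)%N -> (k <= b)%N -> (b <= a)%N -> hom3 a k (b - k) w ->
  hom2 (a + 1) (b - 1) (gamma_preimage k w).
Proof.
move=> k_gt0 le_kb le_ba hw.
apply: hom2_sum => X; apply: hom2_sum => Y; apply: hom2_sum => Z.
have [w0|/hw[cX cY cZ]] := eqVneq (w X Y Z) 0; first by move=> U W; rewrite w0 mul0r eqxx.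
apply/hom2_scale/hom2_sum => j; apply: hom2_scale => U W /split_prod_card.
have := ltn_ord j; rewrite cX cY cZ; lia.
Qed.

End ExteriorCoefficients.

Theorem lemma5p2 (K : fieldType) (n a b k : nat) :
  [pchar K] =i pred0 ->
  (0 < k)%N -> (k <= b)%N -> (b <= a)%N ->
  forall w : {set 'I_n} -> {set 'I_n} -> {set 'I_n} -> K,
    hom3 a k (b - k) w ->
    exists y : {set 'I_n} -> {set 'I_n} -> K,
      hom2 (a + 1) (b - 1) y /\
      forall S V, theta1 a y S V = gamma a k w S V.
Proof.
move=> char0 k_gt0 le_kb le_ba w hw; exists (gamma_preimage k w); split.
  exact: hom2_gamma_preimage hw.
move=> S V; apply: theta1_gamma_preimage (leq_trans le_kb le_ba) _ => // X Y Z.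
by case/hw.
Qed.
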